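(* Let $p_1<p_2<\dots<p_N$ be positive prime numbers and set $k_i=\sqrt{p_i}$ for $i=1,\dots,N$. For $i\neq j$ define the function $\tilde A_{ij}(x)=\cos((k_i-k_j)x)$ of $x\in\mathbb{R}$, whose (fundamental) period is $t_{ij}=2\pi/|k_i-k_j|$. Let $(i,j)$ and $(i',j')$ be index pairs with $i>j$, $i'>j'$ and $\{i,j\}\neq\{i',j'\}$, and let $t_1=t_{ij}$, $t_2=t_{i'j'}$. Then there exist no nonzero integers $n_1,n_2$ such that $n_1t_1=n_2t_2$.
   Context: The functions $\tilde A_{ij}(x)$ are the entries of $\mathbf{Z}\mathbf{Z}^\top$ where $\mathbf{Z}\in\mathbb{R}^{N\times 2}$ has $i$-th row $(\cos(k_ix),\sin(k_ix))$. *)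

From Stdlib Require Import Reals ZArith Znumtheory.
Open Scope R_scope.

(* k_i = sqrt(p_i) for a family of primes p : nat -> nat (indices 0-based). *)
Definition kk (p : nat -> nat) (i : nat) : R := sqrt (INR (p i)).

Definition Atilde (p : nat -> nat) (i j : nat) (x : R) : R :=
  cos ((kk p i - kk p j) * x).

Definition tper (p : nat -> nat) (i j : nat) : R :=
  2 * PI / Rabs (kk p i - kk p j).

From Stdlib Require Import Reals ZArith Znumtheory Lia Lra.
Open Scope R_scope.

(* Commensurable periods mean n1 (sqrt p_i' - sqrt p_j') = n2 (sqrt p_i - sqrt p_j).
   Squaring this twice isolates 8 n1^2 n2^2 sqrt (p_i p_j p_i' p_j') as an integer,
   so p_i p_j p_i' p_j' times a nonzero square is a perfect square.  A prime
   occurring only once in that product makes this impossible, hence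
   {p_i, p_j} = {p_i', p_j'}, and the orderings force (i, j) = (i', j'). *)

Lemma square_eq_mul_square_eq0 (p m u v : Z) :
  prime p -> (p | m)%Z -> ~ (p * p | m)%Z -> (u * u = m * (v * v))%Z -> v = 0%Z.
Proof.
  intros Hp Hpm Hppm. pose proof (prime_ge_2 _ Hp) as Hp2.
  revert u. induction v as [v IH] using (well_founded_induction (Wf_nat.well_founded_ltof Z Z.abs_nat)).
  intros u E.
  destruct Hpm as [m1 ->].
  assert (Hm1 : ~ (p | m1)%Z).
  { intros [q ->]. apply Hppm. exists q. ring. }
  assert (Hu : (p | u)%Z).
  { assert (H : (p | u * u)%Z) by (rewrite E; exists (m1 * (v * v))%Z; ring).
    destruct (prime_mult _ Hp _ _ H); assumption. }
  destruct Hu as [k ->].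
  assert (E1 : (p * (k * k) = m1 * (v * v))%Z).
  { apply (Z.mul_cancel_l _ _ p); [lia|].
    transitivity (k * p * (k * p))%Z; [ring|]. rewrite E. ring. }
  assert (Hv : (p | v)%Z).
  { assert (H : (p | m1 * (v * v))%Z) by (rewrite <- E1; exists (k * k)%Z; ring).
    destruct (prime_mult _ Hp _ _ H) as [|H']; [contradiction|].
    destruct (prime_mult _ Hp _ _ H'); assumption. }
  destruct Hv as [w ->].
  destruct (Z.eq_dec w 0) as [-> | Hw]; [ring|].
  assert (Hlt : (Z.abs_nat w < Z.abs_nat (w * p))%nat) by nia.
  exfalso. apply Hw, (IH w Hlt k).
  apply (Z.mul_cancel_l _ _ p); [lia|]. rewrite E1. ring.
Qed.

Lemma prime_not_divide_mul3 (a b c d : Z) :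
  prime a -> prime b -> prime c -> prime d -> a <> b -> a <> c -> a <> d ->
  ~ (a | b * c * d)%Z.
Proof.
  intros Ha Hb Hc Hd Hab Hac Had H.
  destruct (prime_mult _ Ha _ _ H) as [H1 | H1];
    [destruct (prime_mult _ Ha _ _ H1) as [H2 | H2]|].
  - exact (Hab (prime_div_prime _ _ Ha Hb H2)).
  - exact (Hac (prime_div_prime _ _ Ha Hc H2)).
  - exact (Had (prime_div_prime _ _ Ha Hd H1)).
Qed.

Lemma square_mul4_prime_mem (a b c d z w : Z) :
  prime a -> prime b -> prime c -> prime d -> a <> b -> w <> 0%Z ->
  (z * z = a * b * c * d * (w * w))%Z -> a = c \/ a = d.
Proof.
  intros Ha Hb Hc Hd Hab Hw E.
  destruct (Z.eq_dec a c) as [|Hac]; [now left|].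
  destruct (Z.eq_dec a d) as [|Had]; [now right|].
  exfalso. apply Hw. pose proof (prime_ge_2 _ Ha) as Ha2.
  apply (square_eq_mul_square_eq0 a (a * (b * c * d)) z w Ha).
  - exists (b * c * d)%Z. ring.
  - intros Hdiv. apply (prime_not_divide_mul3 a b c d); auto.
    apply (Z.mul_divide_cancel_l _ _ a); [lia | exact Hdiv].
  - rewrite E. ring.
Qed.

Lemma cross_term_of_mul_diff_eq (n1 n2 sa sb sc sd : R) :
  n1 * (sa - sb) = n2 * (sc - sd) ->
  8 * (n1 * n1) * (n2 * n2) * (sa * sb * sc * sd)
  = 4 * (n1 * n1) ^ 2 * (sa * sa) * (sb * sb) + 4 * (n2 * n2) ^ 2 * (sc * sc) * (sd * sd)
    - ((n1 * n1) * (sa * sa + sb * sb) - (n2 * n2) * (sc * sc + sd * sd)) ^ 2.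
Proof.
  intros E.
  set (u := n1 * n1 * (sa * sb)). set (v := n2 * n2 * (sc * sd)).
  set (r := (n1 * n1) * (sa * sa + sb * sb) - (n2 * n2) * (sc * sc + sd * sd)).
  (* r - 2 (u - v) is the difference of the squares of the two sides of E. *)
  assert (Hr : r = 2 * (u - v)).
  { assert (H : r - 2 * (u - v) = (n1 * (sa - sb)) ^ 2 - (n2 * (sc - sd)) ^ 2)
      by (unfold r, u, v; ring).
    rewrite E in H. lra. }
  transitivity (4 * u ^ 2 + 4 * v ^ 2 - (2 * (u - v)) ^ 2); [unfold u, v; ring|].
  rewrite <- Hr. unfold u, v, r. ring.
Qed.

Lemma commensurable_sqrt_diff_primes (a b c d n1 n2 : Z) :
  prime a -> prime b -> prime c -> prime d -> (b < a)%Z -> (d < c)%Z ->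
  n1 <> 0%Z -> n2 <> 0%Z ->
  IZR n1 * (sqrt (IZR a) - sqrt (IZR b)) = IZR n2 * (sqrt (IZR c) - sqrt (IZR d)) ->
  a = c /\ b = d.
Proof.
  intros Ha Hb Hc Hd Hba Hdc Hn1 Hn2 E.
  assert (Hsq : forall q, prime q -> sqrt (IZR q) * sqrt (IZR q) = IZR q).
  { intros q Hq. pose proof (prime_ge_2 _ Hq). apply sqrt_sqrt, IZR_le. lia. }
  set (w := (8 * (n1 * n1) * (n2 * n2))%Z).
  set (z := (4 * (n1 * n1) ^ 2 * a * b + 4 * (n2 * n2) ^ 2 * c * d
             - ((n1 * n1) * (a + b) - (n2 * n2) * (c + d)) ^ 2)%Z).
  assert (Hz : IZR w * (sqrt (IZR a) * sqrt (IZR b) * sqrt (IZR c) * sqrt (IZR d)) = IZR z).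
  { unfold w, z. rewrite !mult_IZR, (cross_term_of_mul_diff_eq _ _ _ _ _ _ E), !Hsq by assumption.
    rewrite !Z.pow_2_r; repeat rewrite ?minus_IZR, ?plus_IZR, ?mult_IZR.
    ring. }
  assert (Hzz : (z * z = a * b * c * d * (w * w))%Z).
  { apply eq_IZR. rewrite !mult_IZR, <- Hz.
    transitivity (IZR w * IZR w * (sqrt (IZR a) * sqrt (IZR a)) * (sqrt (IZR b) * sqrt (IZR b))
                  * (sqrt (IZR c) * sqrt (IZR c)) * (sqrt (IZR d) * sqrt (IZR d))); [ring|].
    rewrite !Hsq by assumption. ring. }
  assert (Hw : w <> 0%Z) by (unfold w; nia).
  assert (Hac : a = c \/ a = d) by (apply (square_mul4_prime_mem a b c d z w); auto; lia).
  assert (Hbc : b = c \/ b = d).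
  { apply (square_mul4_prime_mem b a c d z w); auto; [lia|]. rewrite Hzz. ring. }
  lia.
Qed.

Lemma mul_period_eq (n1 n2 x y : R) : x <> 0 -> y <> 0 ->
  n1 * (2 * PI / Rabs x) = n2 * (2 * PI / Rabs y) -> n1 * Rabs y = n2 * Rabs x.
Proof.
  intros Hx Hy E. pose proof PI_RGT_0.
  pose proof (Rabs_pos_lt x Hx). pose proof (Rabs_pos_lt y Hy).
  apply (Rmult_eq_reg_r (2 * PI / (Rabs x * Rabs y))); [|apply Rgt_not_eq, Rdiv_lt_0_compat; nra].
  transitivity (n1 * (2 * PI / Rabs x)); [field; lra|].
  rewrite E. field. lra.
Qed.

Theorem lemma1 (N : nat) (p : nat -> nat)
  (Hprime : forall i, (i < N)%nat -> prime (Z.of_nat (p i)))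
  (Hinc : forall i j, (i < j)%nat -> (j < N)%nat -> (p i < p j)%nat)
  (i j i' j' : nat)
  (Hi : (i < N)%nat) (Hi' : (i' < N)%nat)
  (Hij : (j < i)%nat) (Hij' : (j' < i')%nat)
  (Hdiff : (i, j) <> (i', j')) :
  ~ (exists n1 n2 : Z, n1 <> 0%Z /\ n2 <> 0%Z /\
       IZR n1 * tper p i j = IZR n2 * tper p i' j').
Proof.
  intros [n1 [n2 [Hn1 [Hn2 E]]]].
  assert (Hinj : forall k l, (k < N)%nat -> (l < N)%nat -> p k = p l -> k = l).
  { intros k l Hk Hl Hkl. destruct (Nat.lt_total k l) as [H|[H|H]]; auto;
      [specialize (Hinc k l H Hl) | specialize (Hinc l k H Hk)]; lia. }
  assert (Hgap : forall k l, (k < l)%nat -> (l < N)%nat -> 0 < kk p l - kk p k).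
  { intros k l Hkl Hl. apply Rlt_0_minus, sqrt_lt_1; try apply pos_INR.
    apply lt_INR, Hinc; assumption. }
  pose proof (Hgap j i Hij Hi). pose proof (Hgap j' i' Hij' Hi').
  apply mul_period_eq in E; [|lra|lra].
  rewrite !Rabs_pos_eq in E by lra.
  unfold kk in E. rewrite !INR_IZR_INZ in E.
  destruct (commensurable_sqrt_diff_primes _ _ _ _ _ _
              (Hprime i' Hi') (Hprime j' ltac:(lia)) (Hprime i Hi) (Hprime j ltac:(lia))
              ltac:(specialize (Hinc j' i' Hij' Hi'); lia)
              ltac:(specialize (Hinc j i Hij Hi); lia) Hn1 Hn2 E) as [Ei Ej].
  apply Hdiff. f_equal; symmetry; apply Hinj; lia.
Qed.
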